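(* Let $M=(r,q,u)$ be an IC and IR mechanism. (1) If $M$ is undominated, then $M$ is floor-randomized, left continuous, and satisfies DD. (2) If $M$ is dominated, then $M$ is dominated by a mechanism that is floor-randomized, left continuous and satisfies DD.
   Context: Setting. Let $\Theta=[\underline\theta,\overline\theta]$ with $0<\underline\theta<\overline\theta$. Let $c>0$ and let $P:\mathbb R_+\to\mathbb R_+$ be continuous and strictly decreasing with $P(\overline q)=0$ for some $\overline q>0$. Put $V(q)=\int_0^q P(z)\,dz$ and $\mathrm{TS}(\theta,q)=V(q)-c-\theta q$ for $q>0$, $\mathrm{TS}(\theta,0)=0$. Assume (A2): $\mathrm{TS}(\overline\theta,P^{-1}(\overline\theta))>0$. A mechanism is a triple $M=(r,q,u)$ of functions $r:\Theta\to[0,1]$, $q:\Theta\to[0,\overline q]$, $u:\Theta\to\mathbb R$ with $q(\theta)=0$ if and only if $r(\theta)=0$. It is IC if $u(\theta)\ge u(\theta')+(\theta'-\theta)q(\theta')r(\theta')$ for all $\theta,\theta'\in\Theta$, and IR if $u(\theta)\ge 0$ for all $\theta$. (Known fact: $M$ is IC iff $\theta\mapsto q(\theta)r(\theta)$ is nonincreasing and $u(\theta)=u(\overline\theta)+\int_\theta^{\overline\theta}q(z)r(z)\,dz$ for all $\theta$; an IC mechanism is IR iff $u(\overline\theta)\ge0$.) Fix $\alpha\in[0,1)$. The regulator's surplus at $\theta$ is $\mathrm{RS}_\alpha(\theta,M)=r(\theta)\,\mathrm{TS}(\theta,q(\theta))-(1-\alpha)u(\theta)$. An IC and IR mechanism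 $\tilde M$ dominates an IC and IR mechanism $M$ if $\mathrm{RS}_\alpha(\theta,\tilde M)\ge \mathrm{RS}_\alpha(\theta,M)$ for all $\theta\in\Theta$ with strict inequality for some $\theta$; $M$ is undominated if it is IC, IR and not dominated by any IC and IR mechanism. The quantity floor $\hat q$ is the unique $q>0$ with $V(q)-qP(q)=c$. A mechanism $(r,q,u)$ is floor-randomized if it is IC, IR, $u(\overline\theta)=0$, and $\Theta$ can be partitioned into three pairwise disjoint (possibly empty) intervals $\Theta_1,\Theta_{01},\Theta_0$, with every element of $\Theta_0$ larger than every element of $\Theta_{01}$ and every element of $\Theta_{01}$ larger than every element of $\Theta_1$, such that: $q(\theta)\ge\hat q$ and $r(\theta)=1$ for $\theta\in\Theta_1$; $q(\theta)=\hat q$ and $r(\theta)\in(0,1)$ for $\theta\in\Theta_{01}$; $q(\theta)=r(\theta)=0$ for $\theta\in\Theta_0$. The efficient quantity is $q_e(\theta)=P^{-1}(\theta)$. A mechanism satisfies downward distortion (DD) if $q(\theta)\le q_e(\theta)$ for all $\theta$, with equality at $\theta=\underline\theta$; it satisfies strict DD if moreover $q(\theta)<q_e(\theta)$ for every $\theta>\underline\theta$. A mechanism is left continuous if $\theta\mapsto q(\theta)r(\theta)$ is left continuous at every $\theta\in(\underline\theta,\overline\theta]$. *)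

From Stdlib Require Import Reals.
From Coquelicot Require Import Coquelicot.
Open Scope R_scope.

Definition inTheta (tlo thi t : R) : Prop := tlo <= t <= thi.

Definition V (P : R -> R) (q : R) : R := RInt P 0 q.

Definition TS (P : R -> R) (c t q : R) : R :=
  match Rlt_dec 0 q with
  | left _ => V P q - c - t * q
  | right _ => 0
  end.

(* A mechanism (r,q,u): functions on R, only their values on Theta matter. *)
Definition is_mechanism (tlo thi qbar : R) (r q u : R -> R) : Prop :=
  forall t, inTheta tlo thi t ->
    0 <= r t <= 1 /\ 0 <= q t <= qbar /\ (q t = 0 <-> r t = 0).

Definition IC (tlo thi : R) (r q u : R -> R) : Prop :=
  forall t t', inTheta tlo thi t -> inTheta tlo thi t' ->
    u t >= u t' + (t' - t) * q t' * r t'.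

Definition IR (tlo thi : R) (u : R -> R) : Prop :=
  forall t, inTheta tlo thi t -> u t >= 0.

Definition ICIR (tlo thi qbar : R) (r q u : R -> R) : Prop :=
  is_mechanism tlo thi qbar r q u /\ IC tlo thi r q u /\ IR tlo thi u.

Definition RS (P : R -> R) (c alpha : R) (r q u : R -> R) (t : R) : R :=
  r t * TS P c t (q t) - (1 - alpha) * u t.

Definition dominates (tlo thi qbar : R) (P : R -> R) (c alpha : R)
    (r' q' u' r q u : R -> R) : Prop :=
  ICIR tlo thi qbar r' q' u' /\ ICIR tlo thi qbar r q u /\
  (forall t, inTheta tlo thi t -> RS P c alpha r' q' u' t >= RS P c alpha r q u t) /\
  (exists t, inTheta tlo thi t /\ RS P c alpha r' q' u' t > RS P c alpha r q u t).

Definition dominated (tlo thi qbar : R) (P : R -> R) (c alpha : R)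
    (r q u : R -> R) : Prop :=
  exists r' q' u' : R -> R, dominates tlo thi qbar P c alpha r' q' u' r q u.

Definition undominated (tlo thi qbar : R) (P : R -> R) (c alpha : R)
    (r q u : R -> R) : Prop :=
  ICIR tlo thi qbar r q u /\ ~ dominated tlo thi qbar P c alpha r q u.

Definition is_interval (I : R -> Prop) : Prop :=
  forall x y z, I x -> I y -> x <= z <= y -> I z.

Definition floor_randomized (tlo thi qbar qhat : R) (r q u : R -> R) : Prop :=
  ICIR tlo thi qbar r q u /\ u thi = 0 /\
  exists T1 T01 T0 : R -> Prop,
    is_interval T1 /\ is_interval T01 /\ is_interval T0 /\
    (forall t, inTheta tlo thi t <-> (T1 t \/ T01 t \/ T0 t)) /\
    (forall t, ~ (T1 t /\ T01 t)) /\ (forall t, ~ (T1 t /\ T0 t)) /\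
    (forall t, ~ (T01 t /\ T0 t)) /\
    (forall x y, T0 x -> T01 y -> y < x) /\
    (forall x y, T01 x -> T1 y -> y < x) /\
    (forall t, T1 t -> q t >= qhat /\ r t = 1) /\
    (forall t, T01 t -> q t = qhat /\ 0 < r t < 1) /\
    (forall t, T0 t -> q t = 0 /\ r t = 0).

(* Downward distortion relative to the efficient quantity qe = P^{-1}. *)
Definition DD (tlo thi : R) (qe q : R -> R) : Prop :=
  (forall t, inTheta tlo thi t -> q t <= qe t) /\ q tlo = qe tlo.

Definition strict_DD (tlo thi : R) (qe q : R -> R) : Prop :=
  DD tlo thi qe q /\ (forall t, tlo < t <= thi -> q t < qe t).

Definition left_continuous (tlo thi : R) (r q : R -> R) : Prop :=
  forall t, tlo < t <= thi ->
    filterlim (fun s => q s * r s) (at_left t) (locally (q t * r t)).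

(* Given an IC mechanism with allocation x = q r, let x~(t) be the infimum of
   min (x, qe) over [tlo, t) (and x~(tlo) = qe(tlo)): it is nonincreasing, left
   continuous, and lies between min (x, qe) and qe.  Serve x~ with quantity
   max (x~, qhat) and probability x~ / max (x~, qhat), and pay the rents
   int_t^thi x~, computed as a lower Darboux integral; by IC these rents are at
   most u - u(thi).  Since the average surplus (V(q) - c) / q peaks at qhat, among
   all (q, r) with q r = y the floor service maximises r TS(t, q), and the
   resulting welfare increases in y up to qe(t) and decreases after.  Hence the new
   mechanism raises RS_alpha weakly everywhere, strictly somewhere unless M already
   has this form, which is floor-randomized, left continuous and satisfies DD. *)

From Stdlib Require Import Reals Lra List Classical_Prop.
From Coquelicot Require Import Coquelicot.
Open Scope R_scope.

Section Demand.
Variables (P : R -> R) (qbar : R).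
Hypothesis qbar_gt0 : 0 < qbar.
Hypothesis P_cont : forall x, 0 <= x <= qbar ->
  filterlim P (within (fun y => 0 <= y <= qbar) (locally x)) (locally (P x)).
Hypothesis P_decr : forall x y, 0 <= x -> x < y -> y <= qbar -> P y < P x.

Let clamp (x : R) : R := Rmax 0 (Rmin qbar x).

Lemma clamp_in_range x : 0 <= clamp x <= qbar.
Proof. unfold clamp, Rmax, Rmin; repeat destruct Rle_dec; lra. Qed.

Lemma clamp_id x : 0 <= x <= qbar -> clamp x = x.
Proof. intros; unfold clamp, Rmax, Rmin; repeat destruct Rle_dec; lra. Qed.

Lemma clamp_lipschitz x y : Rabs (clamp y - clamp x) <= Rabs (y - x).
Proof.
  unfold clamp, Rmax, Rmin; repeat destruct Rle_dec;
  unfold Rabs; repeat destruct Rcase_abs; lra.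
Qed.

Lemma continuous_P_clamp z : continuous (fun x => P (clamp x)) z.
Proof.
  apply (filterlim_comp _ _ _ clamp P _
           (within (fun y => 0 <= y <= qbar) (locally (clamp z)))).
  - intros Q [e He]. exists e. intros y Hy. apply He; [|apply clamp_in_range].
    exact (Rle_lt_trans _ _ _ (clamp_lipschitz z y) Hy).
  - apply P_cont, clamp_in_range.
Qed.

Lemma ex_RInt_P a b : 0 <= a <= b -> b <= qbar -> ex_RInt P a b.
Proof.
  intros Hab Hb. apply (ex_RInt_ext (fun x => P (clamp x))).
  - intros x Hx. rewrite Rmin_left, Rmax_right in Hx by lra. rewrite clamp_id; lra.
  - apply (@ex_RInt_continuous R_CompleteNormedModule). intros; apply continuous_P_clamp.
Qed.

Lemma RInt_P_bounds a b : 0 <= a -> a <= b -> b <= qbar ->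
  (b - a) * P b <= RInt P a b <= (b - a) * P a.
Proof.
  intros Ha Hab Hb.
  rewrite <- !(RInt_const a b) with (c := P _).
  assert (HP := ex_RInt_P a b ltac:(lra) Hb).
  split; apply RInt_le; auto using ex_RInt_const;
    intros x Hx; left; apply P_decr; lra.
Qed.

(* Splitting at the midpoint turns the weak bounds into strict ones. *)
Lemma V_diff_bounds a b : 0 <= a -> a < b -> b <= qbar ->
  (b - a) * P b < V P b - V P a < (b - a) * P a.
Proof.
  intros Ha Hab Hb. set (m := (a + b) / 2).
  assert (Hsplit : V P b - V P a = RInt P a m + RInt P m b).
  { unfold V. rewrite <- (RInt_Chasles P 0 a b), <- (RInt_Chasles P a m b);
      try (apply ex_RInt_P; unfold m; lra).
    unfold plus; simpl; ring. }
  destruct (RInt_P_bounds a m) as [A1 A2]; try (unfold m; lra).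
  destruct (RInt_P_bounds m b) as [B1 B2]; try (unfold m; lra).
  assert (P b < P m) by (apply P_decr; unfold m; lra).
  assert (P m < P a) by (apply P_decr; unfold m; lra).
  replace (b - a) with ((m - a) + (b - m)) by ring.
  assert (m - a > 0 /\ b - m > 0) as [] by (unfold m; lra).
  rewrite Hsplit; split; nra.
Qed.

Section Floor.
Variables (c qhat : R).
Hypothesis qhat_range : 0 < qhat <= qbar.
Hypothesis qhat_floor : V P qhat - qhat * P qhat = c.

Lemma floor_gain_ge q : qhat <= q <= qbar -> c <= V P q - q * P q.
Proof.
  intros Hq. destruct (Req_dec q qhat) as [->|Hne]; [lra|].
  destruct (V_diff_bounds qhat q) as [K _]; try lra.
  assert (P q < P qhat) by (apply P_decr; lra).
  nra.
Qed.

(* Cross-multiplied forms of: the average surplus [(V q - c) / q] increases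
   up to [qhat], where its first-order condition holds, and decreases after. *)
Lemma avg_surplus_decr q1 q2 : qhat <= q1 -> q1 < q2 -> q2 <= qbar ->
  (V P q2 - c) * q1 < (V P q1 - c) * q2.
Proof.
  intros H1 H12 H2.
  assert (G := floor_gain_ge q1 ltac:(lra)).
  destruct (V_diff_bounds q1 q2) as [_ K]; try lra.
  assert (q1 * ((q2 - q1) * P q1 - (V P q2 - V P q1)) > 0)
    by (apply Rmult_lt_0_compat; lra).
  assert ((q2 - q1) * (V P q1 - q1 * P q1 - c) >= 0)
    by (apply Rle_ge, Rmult_le_pos; lra).
  nra.
Qed.

Lemma avg_surplus_lt_floor q : 0 < q -> q < qhat ->
  (V P q - c) * qhat < (V P qhat - c) * q.
Proof.
  intros Hq Hlt. destruct (V_diff_bounds q qhat) as [K _]; try lra.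
  assert (qhat * (q * P qhat - (V P q - c)) > 0) by (apply Rmult_lt_0_compat; lra).
  nra.
Qed.

Lemma avg_surplus_max_floor y q : 0 < y -> y <= q -> q <= qbar ->
  (V P q - c) * Rmax y qhat <= (V P (Rmax y qhat) - c) * q /\
  (q <> Rmax y qhat -> (V P q - c) * Rmax y qhat < (V P (Rmax y qhat) - c) * q).
Proof.
  intros Hy Hyq Hq. unfold Rmax. destruct (Rle_dec y qhat) as [Hle|Hgt].
  - destruct (Rtotal_order q qhat) as [Hl|[->|Hg]].
    + assert (H := avg_surplus_lt_floor q ltac:(lra) Hl). split; intros; lra.
    + split; intros; [lra|congruence].
    + assert (H := avg_surplus_decr qhat q ltac:(lra) Hg Hq). split; intros; lra.
  - destruct (Req_dec q y) as [->|Hne].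
    + split; intros; [lra|congruence].
    + assert (H := avg_surplus_decr y q ltac:(lra) ltac:(lra) Hq). split; intros; lra.
Qed.

(* Welfare of serving the allocation [y = q r] with quantity [max y qhat]
   and probability [y / max y qhat]. *)
Definition floor_welfare (t y : R) : R :=
  if Rlt_dec 0 y then y / Rmax y qhat * (V P (Rmax y qhat) - c - t * Rmax y qhat)
  else 0.

Lemma TS_le_floor_welfare t q r : 0 < q <= qbar -> 0 < r <= 1 ->
  r * TS P c t q <= floor_welfare t (q * r) /\
  (r * TS P c t q = floor_welfare t (q * r) -> q = Rmax (q * r) qhat).
Proof.
  intros Hq Hr.
  assert (Hy : 0 < q * r) by (apply Rmult_lt_0_compat; lra).
  destruct (avg_surplus_max_floor (q * r) q Hy ltac:(nra) ltac:(lra)) as [M1 M2].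
  set (m := Rmax (q * r) qhat) in *.
  assert (Hm : 0 < m) by (unfold m, Rmax; destruct Rle_dec; lra).
  unfold floor_welfare, TS.
  destruct (Rlt_dec 0 q); [|lra]. destruct (Rlt_dec 0 (q * r)); [|lra]. fold m.
  replace (q * r / m * (V P m - c - t * m))
    with (r / m * ((V P m - c) * q) - t * (q * r)) by (field; lra).
  replace (r * (V P q - c - t * q))
    with (r / m * ((V P q - c) * m) - t * (q * r)) by (field; lra).
  assert (Hrm : 0 < r / m) by (apply Rdiv_lt_0_compat; lra).
  split.
  - apply Rplus_le_compat_r, Rmult_le_compat_l; lra.
  - intros Heq. destruct (Req_dec q m) as [|Hne]; auto.
    specialize (M2 Hne). exfalso. nra.
Qed.

Lemma floor_welfare_below t y : 0 <= y <= qhat -> floor_welfare t y = y * (P qhat - t).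
Proof.
  intros Hy. unfold floor_welfare. destruct (Rlt_dec 0 y).
  - rewrite Rmax_right by lra. rewrite <- qhat_floor. field. lra.
  - replace y with 0 by lra. ring.
Qed.

Lemma floor_welfare_above t y : qhat <= y -> floor_welfare t y = V P y - c - t * y.
Proof.
  intros Hy. unfold floor_welfare. destruct (Rlt_dec 0 y); [|lra].
  rewrite Rmax_left by lra. field. lra.
Qed.

Lemma floor_lt_efficient t e : 0 <= e <= qbar -> P e = t -> TS P c t e > 0 -> qhat < e.
Proof.
  intros He HPe HTS. unfold TS in HTS. destruct (Rlt_dec 0 e); [|lra].
  apply Rnot_le_lt. intros Hle. subst t.
  assert (K : V P qhat - V P e >= (qhat - e) * P qhat).
  { destruct (Req_dec e qhat) as [->|]; [lra|]. destruct (V_diff_bounds e qhat); lra. }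
  assert (P qhat <= P e).
  { destruct (Req_dec e qhat) as [->|]; [lra|]. left; apply P_decr; lra. }
  assert (e * (P e - P qhat) >= 0) by (apply Rle_ge, Rmult_le_pos; lra).
  nra.
Qed.

Section Efficient_quantity.
Variables (t e : R).
Hypothesis e_range : qhat < e <= qbar.
Hypothesis P_e : P e = t.

Lemma floor_welfare_incr y1 y2 : 0 <= y1 -> y1 < y2 -> y2 <= e ->
  floor_welfare t y1 < floor_welfare t y2.
Proof.
  intros Hy1 Hy12 Hy2.
  assert (Pt : t < P qhat) by (subst; apply P_decr; lra).
  assert (Habove : forall a b, qhat <= a -> a < b -> b <= e ->
            floor_welfare t a < floor_welfare t b).
  { intros a b Ha Hab Hb. rewrite !floor_welfare_above by lra.
    destruct (V_diff_bounds a b) as [K _]; try lra.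
    assert (t <= P b).
    { destruct (Req_dec b e) as [->|]; [lra|]. subst; left; apply P_decr; lra. }
    assert ((b - a) * (P b - t) >= 0) by (apply Rle_ge, Rmult_le_pos; lra).
    nra. }
  destruct (Rle_dec y2 qhat).
  - rewrite !floor_welfare_below by lra. nra.
  - destruct (Rle_dec y1 qhat).
    + assert (floor_welfare t y1 <= floor_welfare t qhat)
        by (rewrite !floor_welfare_below by lra; nra).
      assert (floor_welfare t qhat < floor_welfare t y2) by (apply Habove; lra).
      lra.
    + apply Habove; lra.
Qed.

Lemma floor_welfare_decr y : e < y -> y <= qbar -> floor_welfare t y < floor_welfare t e.
Proof.
  intros He Hy. rewrite !floor_welfare_above by lra.
  destruct (V_diff_bounds e y) as [_ K]; try lra. subst. nra.
Qed.

End Efficient_quantity.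
End Floor.
End Demand.
Lemma Lub_Rbar_real_spec (E : R -> Prop) (M y0 : R) :
  E y0 -> (forall y, E y -> y <= M) ->
  (forall y, E y -> y <= real (Lub_Rbar E)) /\
  (forall B, (forall y, E y -> y <= B) -> real (Lub_Rbar E) <= B).
Proof.
  intros Hy0 HM. destruct (Lub_Rbar_correct E) as [Hub Hleast].
  assert (Hfin : Rbar_le (Lub_Rbar E) M) by (apply Hleast; exact HM).
  assert (Hlo := Hub y0 Hy0).
  destruct (Lub_Rbar E) as [l| |]; simpl in *; try contradiction.
  split; [exact Hub|]. intros B HB. exact (Hleast (Finite B) HB).
Qed.

Lemma Glb_Rbar_real_spec (E : R -> Prop) (m y0 : R) :
  E y0 -> (forall y, E y -> m <= y) ->
  (forall y, E y -> real (Glb_Rbar E) <= y) /\ m <= real (Glb_Rbar E) /\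
  (forall eps, 0 < eps -> exists y, E y /\ y < real (Glb_Rbar E) + eps).
Proof.
  intros Hy0 Hm. destruct (Glb_Rbar_correct E) as [Hlb Hgreatest].
  assert (Hfin : Rbar_le m (Glb_Rbar E)) by (apply Hgreatest; exact Hm).
  assert (Hup := Hlb y0 Hy0).
  destruct (Glb_Rbar E) as [g| |]; simpl in *; try contradiction.
  split; [exact Hlb|split; [exact Hfin|]].
  intros eps Heps. apply NNPP. intros Hno.
  assert (Hb : Rbar_le (g + eps) g).
  { apply Hgreatest. intros y Hy. apply Rnot_lt_le. intros Hlt. apply Hno. now exists y. }
  simpl in Hb. lra.
Qed.

Section Lower_integral.
Variable f : R -> R.

(* [chain_sum a [c1; ...; cn]] is the right-endpoint Riemann sum of [f] on the
   partition [a < c1 < ... < cn]: a lower Darboux sum when [f] is nonincreasing. *)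
Fixpoint chain_sum (a : R) (l : list R) : R :=
  match l with nil => 0 | b :: l' => (b - a) * f b + chain_sum b l' end.

Fixpoint chain_end (a : R) (l : list R) : R :=
  match l with nil => a | b :: l' => chain_end b l' end.

Fixpoint chain_incr (a : R) (l : list R) : Prop :=
  match l with nil => True | b :: l' => a < b /\ chain_incr b l' end.

Definition partition_sums (a b : R) : R -> Prop :=
  fun y => exists l, chain_incr a l /\ chain_end a l = b /\ y = chain_sum a l.

Definition lower_integral (a b : R) : R := real (Lub_Rbar (partition_sums a b)).

Lemma chain_end_ge a l : chain_incr a l -> a <= chain_end a l.
Proof.
  revert a; induction l as [|b l IH]; simpl; intros a H; [lra|].
  destruct H as [Hab Hl]. specialize (IH b Hl). lra.
Qed.

Lemma chain_sum_le_diff lo hi (g : R -> R) a l :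
  (forall a b, lo <= a -> a < b -> b <= hi -> (b - a) * f b <= g a - g b) ->
  lo <= a -> chain_incr a l -> chain_end a l <= hi ->
  chain_sum a l <= g a - g (chain_end a l).
Proof.
  intros Hg. revert a; induction l as [|b l IH]; simpl; intros a Ha Hl Hend; [lra|].
  destruct Hl as [Hab Hl]. assert (Hb := chain_end_ge b l Hl).
  specialize (IH b ltac:(lra) Hl Hend). specialize (Hg a b Ha Hab ltac:(lra)). lra.
Qed.

Section Nonincreasing.
Variables lo hi : R.
Hypothesis f_nonneg_nonincr : forall s t, lo <= s -> s <= t -> t <= hi -> 0 <= f t <= f s.

Lemma chain_sum_bounds a l : lo <= a -> chain_incr a l -> chain_end a l <= hi ->
  0 <= chain_sum a l <= (chain_end a l - a) * f a.
Proof.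
  revert a; induction l as [|b l IH]; simpl; intros a Ha Hl Hend; [lra|].
  destruct Hl as [Hab Hl]. assert (Hb := chain_end_ge b l Hl).
  destruct (IH b ltac:(lra) Hl Hend) as [I1 I2].
  assert (F := f_nonneg_nonincr a b ltac:(lra) ltac:(lra) ltac:(lra)).
  assert ((b - a) * f b >= 0) by (apply Rle_ge, Rmult_le_pos; lra).
  assert ((chain_end b l - b) * (f a - f b) >= 0) by (apply Rle_ge, Rmult_le_pos; lra).
  split; nra.
Qed.

Lemma chain_sum_refine a b l : lo <= a -> chain_incr a l -> a < b -> b <= chain_end a l ->
  chain_end a l <= hi ->
  exists l', chain_incr b l' /\ chain_end b l' = chain_end a l /\
             chain_sum a l <= (b - a) * f a + chain_sum b l'.
Proof.
  revert a; induction l as [|d l IH]; simpl; intros a Ha Hl Hab Hb Hend; [lra|].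
  destruct Hl as [Had Hl]. assert (Hd := chain_end_ge d l Hl).
  assert (F := f_nonneg_nonincr a d ltac:(lra) ltac:(lra) ltac:(lra)).
  destruct (Rtotal_order d b) as [Hdb|[<-|Hdb]].
  - destruct (IH d ltac:(lra) Hl Hdb Hb Hend) as [l' [L1 [L2 L3]]].
    exists l'. repeat split; auto.
    assert ((d - a) * (f a - f d) >= 0) by (apply Rle_ge, Rmult_le_pos; lra).
    assert ((b - d) * (f a - f d) >= 0) by (apply Rle_ge, Rmult_le_pos; lra).
    nra.
  - exists l. repeat split; auto.
    assert ((d - a) * (f a - f d) >= 0) by (apply Rle_ge, Rmult_le_pos; lra). nra.
  - exists (d :: l). simpl. repeat split; auto.
    assert ((b - a) * (f a - f d) >= 0) by (apply Rle_ge, Rmult_le_pos; lra). nra.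
Qed.

Lemma lower_integral_spec a : lo <= a <= hi ->
  (forall y, partition_sums a hi y -> y <= lower_integral a hi) /\
  (forall B, (forall y, partition_sums a hi y -> y <= B) -> lower_integral a hi <= B).
Proof.
  intros Ha. apply (Lub_Rbar_real_spec _ ((hi - a) * f a) (chain_sum a (hi :: nil))).
  - destruct (Req_dec a hi) as [->|Hne].
    + exists nil. simpl. split; auto. split; auto. ring.
    + exists (hi :: nil). simpl. repeat split; auto; lra.
  - intros y [l [Hl [Hend ->]]].
    destruct (chain_sum_bounds a l) as [_ Hbound]; [lra|exact Hl|lra|].
    rewrite Hend in Hbound; exact Hbound.
Qed.

Lemma lower_integral_diag : lo <= hi -> lower_integral hi hi = 0.
Proof.
  intros Hhi. destruct (lower_integral_spec hi) as [Hub Hleast]; [lra|].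
  apply Rle_antisym.
  - apply Hleast. intros y [[|b l] [Hl [Hend ->]]]; simpl in *; [lra|].
    destruct Hl as [Hb Hl]. assert (Hend' := chain_end_ge b l Hl). lra.
  - apply Hub. exists nil. simpl. auto.
Qed.

Lemma lower_integral_lbound a b : lo <= a -> a < b -> b <= hi ->
  lower_integral b hi + (b - a) * f b <= lower_integral a hi.
Proof.
  intros Ha Hab Hb.
  destruct (lower_integral_spec a) as [Hub _]; [lra|].
  destruct (lower_integral_spec b) as [_ Hleast]; [lra|].
  cut (lower_integral b hi <= lower_integral a hi - (b - a) * f b); [lra|].
  apply Hleast. intros y [l [Hl [Hend ->]]].
  cut ((b - a) * f b + chain_sum b l <= lower_integral a hi); [lra|].
  apply Hub. exists (b :: l). simpl. repeat split; auto.
Qed.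

Lemma lower_integral_ubound a b : lo <= a -> a < b -> b <= hi ->
  lower_integral a hi <= lower_integral b hi + (b - a) * f a.
Proof.
  intros Ha Hab Hb.
  destruct (lower_integral_spec a) as [_ Hleast]; [lra|].
  destruct (lower_integral_spec b) as [Hub _]; [lra|].
  apply Hleast. intros y [l [Hl [Hend ->]]].
  destruct (chain_sum_refine a b l) as [l' [L1 [L2 L3]]]; [lra|exact Hl|lra..|].
  assert (chain_sum b l' <= lower_integral b hi) by (apply Hub; exists l'; repeat split; auto; lra).
  lra.
Qed.

Lemma lower_integral_nonneg a : lo <= a <= hi -> 0 <= lower_integral a hi.
Proof.
  intros Ha. destruct (Req_dec a hi) as [->|Hne]; [rewrite lower_integral_diag; lra|].
  assert (H := lower_integral_lbound a hi ltac:(lra) ltac:(lra) ltac:(lra)).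
  rewrite lower_integral_diag in H by lra.
  assert (F := f_nonneg_nonincr hi hi ltac:(lra) ltac:(lra) ltac:(lra)).
  assert ((hi - a) * f hi >= 0) by (apply Rle_ge, Rmult_le_pos; lra). lra.
Qed.

Lemma lower_integral_le_diff (g : R -> R) a :
  (forall a b, lo <= a -> a < b -> b <= hi -> (b - a) * f b <= g a - g b) ->
  lo <= a <= hi -> lower_integral a hi <= g a - g hi.
Proof.
  intros Hg Ha. destruct (lower_integral_spec a) as [_ Hleast]; [lra|].
  apply Hleast. intros y [l [Hl [Hend ->]]]. rewrite <- Hend.
  apply (chain_sum_le_diff lo hi); auto; lra.
Qed.

End Nonincreasing.
End Lower_integral.

Lemma le_mul_of_forall_lt a b K D : a < b ->
  (forall s, a < s < b -> (s - a) * K <= D) -> (b - a) * K <= D.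
Proof.
  intros Hab Hs. apply Rnot_lt_le. intros Hlt.
  destruct (Rle_lt_dec K 0) as [HK|HK].
  - assert (H := Hs ((a + b) / 2) ltac:(lra)). nra.
  - set (d := ((b - a) * K - D) / (2 * K)).
    assert (Hd : 0 < d) by (apply Rdiv_lt_0_compat; lra).
    set (s := Rmax ((a + b) / 2) (b - d)).
    assert (Hsab : a < s < b) by (unfold s, Rmax; destruct Rle_dec; lra).
    assert (H := Hs s Hsab).
    assert (Hsd : b - d <= s) by apply Rmax_r.
    assert ((b - d - a) * K = (b - a) * K - ((b - a) * K - D) / 2)
      by (unfold d; field; lra).
    nra.
Qed.

Section Model.
Variables (tlo thi c qbar alpha qhat : R) (P qe : R -> R).
Hypothesis Theta_range : 0 < tlo < thi.
Hypothesis qbar_gt0 : 0 < qbar.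
Hypothesis P_cont : forall x, 0 <= x <= qbar ->
  filterlim P (within (fun y => 0 <= y <= qbar) (locally x)) (locally (P x)).
Hypothesis P_decr : forall x y, 0 <= x -> x < y -> y <= qbar -> P y < P x.
Hypothesis qe_inverse : forall t, inTheta tlo thi t -> 0 <= qe t <= qbar /\ P (qe t) = t.
Hypothesis TS_thi_pos : TS P c thi (qe thi) > 0.
Hypothesis qhat_range : 0 < qhat <= qbar.
Hypothesis qhat_floor : V P qhat - qhat * P qhat = c.
Hypothesis alpha_range : 0 <= alpha < 1.

Lemma qe_decr s t : tlo <= s -> s <= t -> t <= thi -> qe t <= qe s.
Proof.
  intros. destruct (qe_inverse s) as [[A1 A2] A3]; [split; lra|].
  destruct (qe_inverse t) as [[B1 B2] B3]; [split; lra|].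
  apply Rnot_lt_le; intros Hlt.
  assert (P (qe t) < P (qe s)) by (apply P_decr; lra). lra.
Qed.

Lemma qhat_lt_qe t : inTheta tlo thi t -> qhat < qe t.
Proof.
  intros Ht. destruct (qe_inverse thi) as [Hrange HP]; [split; lra|].
  assert (qhat < qe thi) by (apply (floor_lt_efficient P qbar) with c thi; auto).
  assert (qe thi <= qe t) by (apply qe_decr; unfold inTheta in Ht; lra). lra.
Qed.

Definition regular_alloc (y : R -> R) : Prop :=
  (forall t, inTheta tlo thi t -> 0 <= y t <= qe t) /\
  (forall s t, tlo <= s -> s <= t -> t <= thi -> y t <= y s) /\
  y tlo = qe tlo /\
  (forall t, tlo < t <= thi -> filterlim y (at_left t) (locally (y t))).

Definition serves_with_floor (y r q : R -> R) : Prop :=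
  forall t, inTheta tlo thi t ->
    q t * r t = y t /\ (0 < y t -> q t = Rmax (y t) qhat) /\
    (y t = 0 -> q t = 0 /\ r t = 0).

Section Floor_service.
Variables (y r q u : R -> R).
Hypothesis y_regular : regular_alloc y.
Hypothesis y_served : serves_with_floor y r q.

Lemma floor_service_randomized :
  ICIR tlo thi qbar r q u -> u thi = 0 -> floor_randomized tlo thi qbar qhat r q u.
Proof.
  intros HM Hu. destruct y_regular as [Hy [Hmono _]].
  split; [exact HM|split; [exact Hu|]].
  exists (fun t => inTheta tlo thi t /\ qhat <= y t),
         (fun t => inTheta tlo thi t /\ 0 < y t < qhat),
         (fun t => inTheta tlo thi t /\ y t = 0).
  unfold inTheta in *.
  split; [|split; [|split; [|split; [|split; [|split; [|split;
    [|split; [|split; [|split; [|split]]]]]]]]]].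
  - intros a b w [Ha Ha'] [Hb Hb'] Hw.
    assert (y b <= y w) by (apply Hmono; lra). split; lra.
  - intros a b w [Ha Ha'] [Hb Hb'] Hw.
    assert (y b <= y w) by (apply Hmono; lra).
    assert (y w <= y a) by (apply Hmono; lra). split; lra.
  - intros a b w [Ha Ha'] [Hb Hb'] Hw.
    assert (y w <= y a) by (apply Hmono; lra).
    assert (0 <= y w) by (apply Hy; lra). split; lra.
  - intros t. split.
    + intros Ht. assert (Hyt := Hy t Ht).
      destruct (Rle_dec qhat (y t)); [left; auto|].
      destruct (Req_dec (y t) 0); [right; right|right; left]; split; auto; lra.
    + intros [[Ht _]|[[Ht _]|[Ht _]]]; exact Ht.
  - intros t [[_ A] [_ B]]. lra.
  - intros t [[_ A] [_ B]]. lra.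
  - intros t [[_ A] [_ B]]. lra.
  - intros a b [Ha A] [Hb B]. apply Rnot_le_lt. intros Hle.
    assert (y b <= y a) by (apply Hmono; lra). lra.
  - intros a b [Ha A] [Hb B]. apply Rnot_le_lt. intros Hle.
    assert (y b <= y a) by (apply Hmono; lra). lra.
  - intros t [Ht A]. destruct (y_served t Ht) as [Hprod [Hq _]].
    rewrite Hq, Rmax_left in Hprod |- * by lra. split; [lra|].
    apply Rmult_eq_reg_l with (y t); lra.
  - intros t [Ht A]. destruct (y_served t Ht) as [Hprod [Hq _]].
    rewrite Hq, Rmax_right in Hprod |- * by lra. split; [lra|].
    assert (Hr : r t = y t / qhat) by (rewrite <- Hprod; field; lra).
    rewrite Hr. split; [apply Rdiv_lt_0_compat; lra|].
    apply (Rmult_lt_reg_r qhat); [lra|]. field_simplify; lra.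
  - intros t [Ht A]. apply (y_served t Ht). exact A.
Qed.

Lemma floor_service_left_continuous : left_continuous tlo thi r q.
Proof.
  intros t Ht. destruct y_regular as [_ [_ [_ Hlc]]].
  rewrite (proj1 (y_served t ltac:(unfold inTheta; lra))).
  apply (filterlim_ext_loc y); [|exact (Hlc t Ht)].
  assert (Hd : 0 < t - tlo) by lra. exists (mkposreal _ Hd).
  intros s Hs Hst. change (Rabs (s - t) < t - tlo) in Hs. apply Rabs_def2 in Hs.
  symmetry. apply (y_served s). unfold inTheta; lra.
Qed.

Lemma floor_service_DD : DD tlo thi qe q.
Proof.
  destruct y_regular as [Hy [_ [Htlo _]]]. split.
  - intros t Ht. destruct (y_served t Ht) as [_ [Hq Hz]].
    assert (Hyt := Hy t Ht). assert (qhat < qe t) by (apply qhat_lt_qe; auto).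
    destruct (Req_dec (y t) 0) as [E|E].
    + rewrite (proj1 (Hz E)). lra.
    + rewrite Hq by lra. unfold Rmax; destruct Rle_dec; lra.
  - assert (Ht : inTheta tlo thi tlo) by (unfold inTheta; lra).
    destruct (y_served tlo Ht) as [_ [Hq _]].
    assert (qhat < qe tlo) by (apply qhat_lt_qe; auto).
    rewrite Hq, Htlo, Rmax_left by lra. reflexivity.
Qed.

Lemma floor_service_properties : ICIR tlo thi qbar r q u -> u thi = 0 ->
  floor_randomized tlo thi qbar qhat r q u /\ left_continuous tlo thi r q /\ DD tlo thi qe q.
Proof.
  intros HM Hu. split; [|split].
  - exact (floor_service_randomized HM Hu).
  - exact floor_service_left_continuous.
  - exact floor_service_DD.
Qed.

End Floor_service.

Section Envelope.
Variables (r q u : R -> R).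
Hypothesis M_ICIR : ICIR tlo thi qbar r q u.

Definition alloc (t : R) : R := q t * r t.

Definition capped (t : R) : R := Rmin (alloc t) (qe t).

Definition capped_before (t : R) : R -> Prop :=
  fun y => exists s, tlo <= s < t /\ y = capped s.

Definition envelope (t : R) : R :=
  if Rlt_dec tlo t then real (Glb_Rbar (capped_before t)) else qe tlo.

Lemma alloc_range t : inTheta tlo thi t -> 0 <= alloc t <= qbar.
Proof.
  intros Ht. destruct M_ICIR as [Hm _].
  destruct (Hm t Ht) as [[R1 R2] [[Q1 Q2] _]].
  unfold alloc. split; [apply Rmult_le_pos|]; nra.
Qed.

Lemma alloc_IC a b : inTheta tlo thi a -> inTheta tlo thi b -> a < b ->
  (b - a) * alloc b <= u a - u b <= (b - a) * alloc a.
Proof.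
  intros Ha Hb Hab. destruct M_ICIR as [_ [Hic _]].
  assert (I1 := Hic a b Ha Hb). assert (I2 := Hic b a Hb Ha).
  unfold alloc. nra.
Qed.

Lemma alloc_decr s t : tlo <= s -> s <= t -> t <= thi -> alloc t <= alloc s.
Proof.
  intros Hs Hst Ht. destruct (Req_dec s t) as [->|Hne]; [lra|].
  assert (H := alloc_IC s t ltac:(split; lra) ltac:(split; lra) ltac:(lra)).
  apply Rmult_le_reg_l with (t - s); lra.
Qed.

Lemma capped_range t : inTheta tlo thi t -> 0 <= capped t <= qe t.
Proof.
  intros Ht. assert (A := alloc_range t Ht). destruct (qe_inverse t Ht) as [B _].
  unfold capped, Rmin. destruct Rle_dec; lra.
Qed.

Lemma capped_decr s t : tlo <= s -> s <= t -> t <= thi -> capped t <= capped s.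
Proof.
  intros Hs Hst Ht. assert (A := alloc_decr s t Hs Hst Ht).
  assert (B := qe_decr s t Hs Hst Ht).
  unfold capped, Rmin. repeat destruct Rle_dec; lra.
Qed.

Lemma envelope_tlo : envelope tlo = qe tlo.
Proof. unfold envelope. destruct Rlt_dec; [lra|reflexivity]. Qed.

Lemma envelope_glb t : tlo < t <= thi ->
  (forall s, tlo <= s < t -> envelope t <= capped s) /\
  (forall eps, 0 < eps -> exists s, tlo <= s < t /\ capped s < envelope t + eps).
Proof.
  intros Ht. unfold envelope. destruct (Rlt_dec tlo t); [|lra].
  destruct (Glb_Rbar_real_spec (capped_before t) 0 (capped tlo)) as [Hlb [_ Happrox]].
  - exists tlo. split; [lra|reflexivity].
  - intros y [s [Hs ->]]. apply capped_range. split; lra.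
  - split.
    + intros s Hs. apply Hlb. exists s; auto.
    + intros eps Heps. destruct (Happrox eps Heps) as [y [[s [Hs ->]] Hy]]. eauto.
Qed.

Lemma capped_le_envelope t : inTheta tlo thi t -> capped t <= envelope t.
Proof.
  intros [H1 H2]. destruct (Req_dec t tlo) as [->|Hne].
  - rewrite envelope_tlo. apply capped_range. split; lra.
  - destruct (envelope_glb t) as [_ Happrox]; [lra|].
    apply Rnot_lt_le. intros Hlt.
    destruct (Happrox (capped t - envelope t)) as [s [Hs Hcs]]; [lra|].
    assert (capped t <= capped s) by (apply capped_decr; lra). lra.
Qed.

Lemma envelope_nonneg t : inTheta tlo thi t -> 0 <= envelope t.
Proof.
  intros Ht. assert (A := capped_le_envelope t Ht). assert (B := capped_range t Ht). lra.
Qed.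

Lemma envelope_decr s t : tlo <= s -> s <= t -> t <= thi -> envelope t <= envelope s.
Proof.
  intros H1 H2 H3. destruct (Req_dec s t) as [->|Hne]; [lra|].
  destruct (envelope_glb t) as [Hlb _]; [lra|].
  destruct (Req_dec s tlo) as [->|Hne'].
  - rewrite envelope_tlo. assert (envelope t <= capped tlo) by (apply Hlb; lra).
    assert (capped tlo <= qe tlo) by (apply capped_range; split; lra). lra.
  - destruct (envelope_glb s) as [_ Happrox]; [lra|].
    apply Rnot_lt_le. intros Hlt.
    destruct (Happrox (envelope t - envelope s)) as [s' [Hs' Hcs']]; [lra|].
    assert (envelope t <= capped s') by (apply Hlb; lra). lra.
Qed.

Lemma envelope_nonneg_nonincr s t : tlo <= s -> s <= t -> t <= thi ->
  0 <= envelope t <= envelope s.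
Proof.
  intros. split; [apply envelope_nonneg; split; lra|apply envelope_decr; lra].
Qed.

Lemma envelope_left_continuous t : tlo < t <= thi ->
  filterlim envelope (at_left t) (locally (envelope t)).
Proof.
  intros Ht. apply filterlim_locally. intros eps.
  destruct (envelope_glb t) as [_ Happrox]; [lra|].
  destruct (Happrox eps (cond_pos eps)) as [s0 [Hs0 Hcs0]].
  assert (Hd : 0 < t - s0) by lra. exists (mkposreal _ Hd).
  intros s Hs Hst. change (Rabs (s - t) < t - s0) in Hs.
  change (Rabs (envelope s - envelope t) < eps).
  apply Rabs_def2 in Hs.
  assert (envelope t <= envelope s) by (apply envelope_decr; lra).
  assert (envelope s <= capped s0) by (apply (envelope_glb s); lra).
  apply Rabs_def1; lra.
Qed.

(* If [envelope t > qe t], then [capped s >= envelope t] for [s < t] close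
   to [t] would put [qe s] above [qe t = P^-1 t] by a fixed margin. *)
Lemma envelope_le_qe t : inTheta tlo thi t -> envelope t <= qe t.
Proof.
  intros [H1 H2]. destruct (Req_dec t tlo) as [->|Hne]; [rewrite envelope_tlo; lra|].
  apply Rnot_lt_le. intros Hlt. set (y := envelope t) in *.
  destruct (envelope_glb t) as [Hlb _]; [lra|].
  assert (y <= capped tlo) by (apply Hlb; lra).
  assert (capped tlo <= qe tlo) by (apply capped_range; split; lra).
  destruct (qe_inverse tlo) as [[E1 E2] _]; [split; lra|].
  destruct (qe_inverse t) as [[F1 F2] F3]; [split; lra|].
  assert (HPy : P y < t) by (rewrite <- F3; apply P_decr; lra).
  set (s := Rmax tlo ((P y + t) / 2)).
  assert (Hs : tlo <= s < t /\ P y < s) by (unfold s, Rmax; destruct Rle_dec; lra).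
  assert (Hys : y <= qe s).
  { assert (y <= capped s) by (apply Hlb; lra).
    assert (capped s <= qe s) by (apply capped_range; split; lra). lra. }
  destruct (qe_inverse s) as [[G1 G2] G3]; [split; lra|].
  destruct (Req_dec y (qe s)) as [Heq|Hne'].
  - rewrite <- Heq in G3. lra.
  - assert (P (qe s) < P y) by (apply P_decr; lra). lra.
Qed.

Lemma envelope_regular : regular_alloc envelope.
Proof.
  split; [|split; [|split]].
  - intros t Ht. split; [apply envelope_nonneg|apply envelope_le_qe]; auto.
  - exact envelope_decr.
  - exact envelope_tlo.
  - exact envelope_left_continuous.
Qed.

Lemma envelope_le_alloc s t : tlo <= s -> s < t -> t <= thi -> envelope t <= alloc s.
Proof.
  intros. assert (envelope t <= capped s) by (apply (envelope_glb t); lra).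
  assert (capped s <= alloc s) by apply Rmin_l. lra.
Qed.

Lemma rent_drop_ge a b : tlo <= a -> a < b -> b <= thi -> (b - a) * envelope b <= u a - u b.
Proof.
  intros Ha Hab Hb. apply le_mul_of_forall_lt; auto. intros s Hs.
  assert (I1 := alloc_IC a s ltac:(split; lra) ltac:(split; lra) ltac:(lra)).
  assert (I2 := alloc_IC s b ltac:(split; lra) ltac:(split; lra) ltac:(lra)).
  assert (X1 : envelope b <= alloc s) by (apply envelope_le_alloc; lra).
  assert (X2 : 0 <= alloc b) by (apply alloc_range; split; lra).
  assert ((s - a) * (alloc s - envelope b) >= 0) by (apply Rle_ge, Rmult_le_pos; lra).
  assert ((b - s) * alloc b >= 0) by (apply Rle_ge, Rmult_le_pos; lra).
  nra.
Qed.


Definition rent (t : R) : R := lower_integral envelope t thi.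

Definition floor_q (t : R) : R :=
  if Rlt_dec 0 (envelope t) then Rmax (envelope t) qhat else 0.

Definition floor_r (t : R) : R :=
  if Rlt_dec 0 (envelope t) then envelope t / Rmax (envelope t) qhat else 0.

Lemma rent_thi : rent thi = 0.
Proof. apply (lower_integral_diag envelope tlo); [exact envelope_nonneg_nonincr|lra]. Qed.

Lemma rent_le_u t : inTheta tlo thi t -> rent t <= u t - u thi.
Proof.
  intros Ht. apply (lower_integral_le_diff envelope tlo); auto.
  - exact envelope_nonneg_nonincr.
  - exact rent_drop_ge.
Qed.

Lemma floor_serves : serves_with_floor envelope floor_r floor_q.
Proof.
  intros t Ht. unfold floor_q, floor_r. destruct Rlt_dec as [Hpos|Hnpos].
  - assert (0 < Rmax (envelope t) qhat) by (unfold Rmax; destruct Rle_dec; lra).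
    split; [field; lra|split; [reflexivity|lra]].
  - assert (H := envelope_nonneg t Ht). split; [|split]; lra.
Qed.

Lemma floor_ICIR : ICIR tlo thi qbar floor_r floor_q rent.
Proof.
  split; [|split].
  - intros t Ht. assert (H0 := envelope_nonneg t Ht). assert (H1 := envelope_le_qe t Ht).
    destruct (qe_inverse t Ht) as [[E1 E2] _].
    unfold floor_q, floor_r. destruct Rlt_dec; [|lra].
    assert (Hm : envelope t <= Rmax (envelope t) qhat /\ qhat <= Rmax (envelope t) qhat)
      by (split; [apply Rmax_l|apply Rmax_r]).
    assert (Hr : 0 < envelope t / Rmax (envelope t) qhat) by (apply Rdiv_lt_0_compat; lra).
    split; [split; [lra|]|split; [split|split]]; try lra.
    + apply (Rmult_le_reg_r (Rmax (envelope t) qhat)); [lra|]. field_simplify; lra.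
    + unfold Rmax; destruct Rle_dec; lra.
  - intros t t' Ht Ht'. rewrite Rmult_assoc, (proj1 (floor_serves t' Ht')).
    destruct Ht as [A1 A2], Ht' as [B1 B2].
    destruct (Rtotal_order t t') as [Hlt|[->|Hgt]].
    + assert (H := lower_integral_lbound envelope tlo thi envelope_nonneg_nonincr t t').
      unfold rent. lra.
    + lra.
    + assert (H := lower_integral_ubound envelope tlo thi envelope_nonneg_nonincr t' t).
      unfold rent. lra.
  - intros t Ht. apply Rle_ge, (lower_integral_nonneg envelope tlo); auto.
    exact envelope_nonneg_nonincr.
Qed.

Lemma floor_welfare_envelope t : inTheta tlo thi t ->
  floor_r t * TS P c t (floor_q t) = floor_welfare P c qhat t (envelope t).
Proof.
  intros Ht. unfold floor_r, floor_q, floor_welfare. destruct Rlt_dec; [|lra].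
  unfold TS. destruct (Rlt_dec 0 (Rmax (envelope t) qhat)) as [|Hn]; [reflexivity|].
  exfalso; apply Hn. unfold Rmax; destruct Rle_dec; lra.
Qed.

Lemma TS_le_floor_welfare_alloc t : inTheta tlo thi t ->
  r t * TS P c t (q t) <= floor_welfare P c qhat t (alloc t) /\
  (r t * TS P c t (q t) = floor_welfare P c qhat t (alloc t) -> 0 < alloc t ->
   q t = Rmax (alloc t) qhat).
Proof.
  intros Ht. destruct M_ICIR as [Hm _]. destruct (Hm t Ht) as [[R1 R2] [[Q1 Q2] Hiff]].
  destruct (Req_dec (q t) 0) as [Hz|Hnz].
  - assert (Hr : r t = 0) by (apply Hiff; auto).
    unfold alloc. rewrite Hz, Hr, Rmult_0_l. unfold floor_welfare, TS.
    repeat destruct Rlt_dec; split; intros; lra.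
  - assert (Hr : r t <> 0) by (intros E; apply Hnz, Hiff; auto).
    destruct (TS_le_floor_welfare P qbar qbar_gt0 P_cont P_decr c qhat qhat_range
                qhat_floor t (q t) (r t)) as [H1 H2]; [lra..|].
    split; auto.
Qed.

(* [capped t <= envelope t <= qe t], and [floor_welfare t] peaks at [qe t]. *)
Lemma floor_welfare_alloc_le t : inTheta tlo thi t ->
  floor_welfare P c qhat t (alloc t) <= floor_welfare P c qhat t (envelope t) /\
  (alloc t <> envelope t ->
   floor_welfare P c qhat t (alloc t) < floor_welfare P c qhat t (envelope t)).
Proof.
  intros Ht. destruct (qe_inverse t Ht) as [Hqe HPqe].
  assert (Hlt := qhat_lt_qe t Ht). assert (Hx := alloc_range t Ht).
  assert (Hc := capped_le_envelope t Ht). assert (He := envelope_le_qe t Ht).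
  unfold capped, Rmin in Hc. destruct (Rle_dec (alloc t) (qe t)) as [Hle|Hgt].
  - destruct (Req_dec (alloc t) (envelope t)) as [<-|Hne]; [split; intros; lra|].
    assert (floor_welfare P c qhat t (alloc t) < floor_welfare P c qhat t (envelope t))
      by (apply (floor_welfare_incr P qbar) with (e := qe t); auto; lra).
    split; intros; lra.
  - replace (envelope t) with (qe t) by lra.
    assert (floor_welfare P c qhat t (alloc t) < floor_welfare P c qhat t (qe t))
      by (apply (floor_welfare_decr P qbar); auto; lra).
    split; intros; lra.
Qed.

Lemma RS_floor_sub t : inTheta tlo thi t ->
  RS P c alpha floor_r floor_q rent t - RS P c alpha r q u t =
  (floor_welfare P c qhat t (envelope t) - r t * TS P c t (q t)) +
  (1 - alpha) * (u t - rent t).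
Proof. intros Ht. unfold RS. rewrite floor_welfare_envelope by auto. ring. Qed.

Lemma RS_floor_gain_nonneg t : inTheta tlo thi t ->
  0 <= floor_welfare P c qhat t (envelope t) - r t * TS P c t (q t) /\
  0 <= (1 - alpha) * (u t - rent t).
Proof.
  intros Ht.
  destruct (TS_le_floor_welfare_alloc t Ht) as [HTS _].
  destruct (floor_welfare_alloc_le t Ht) as [HW _].
  assert (Hrent := rent_le_u t Ht).
  destruct M_ICIR as [_ [_ Hir]]. assert (Hu := Hir thi ltac:(split; lra)).
  split; [lra|apply Rmult_le_pos; lra].
Qed.

Lemma RS_floor_ge t : inTheta tlo thi t ->
  RS P c alpha floor_r floor_q rent t >= RS P c alpha r q u t.
Proof.
  intros Ht. assert (E := RS_floor_sub t Ht).
  destruct (RS_floor_gain_nonneg t Ht). lra.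
Qed.

(* Both gains must vanish; the strict parts of the welfare comparisons then show
   that [M] already serves [envelope] with the floor. *)
Lemma RS_floor_le_serves :
  (forall t, inTheta tlo thi t -> RS P c alpha floor_r floor_q rent t <= RS P c alpha r q u t) ->
  u thi = 0 /\ serves_with_floor envelope r q.
Proof.
  intros Hle.
  assert (Hzero : forall t, inTheta tlo thi t ->
    floor_welfare P c qhat t (envelope t) = r t * TS P c t (q t) /\ u t = rent t).
  { intros t Ht. assert (E := RS_floor_sub t Ht). assert (L := Hle t Ht).
    destruct (RS_floor_gain_nonneg t Ht) as [G1 G2].
    split; [lra|].
    assert (Hprod : (1 - alpha) * (u t - rent t) = 0) by lra.
    destruct (Rmult_integral _ _ Hprod); lra. }
  split.
  - destruct (Hzero thi) as [_ Hu]; [split; lra|]. rewrite Hu. exact rent_thi.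
  - intros t Ht. destruct (Hzero t Ht) as [HW _].
    destruct (TS_le_floor_welfare_alloc t Ht) as [HTS Hfloor].
    destruct (floor_welfare_alloc_le t Ht) as [_ Hstrict].
    assert (Halloc : alloc t = envelope t).
    { destruct (Req_dec (alloc t) (envelope t)) as [|Hne]; auto.
      specialize (Hstrict Hne). lra. }
    unfold alloc in *. split; [exact Halloc|split].
    + intros Hpos. rewrite <- Halloc in *. apply Hfloor; lra.
    + intros Hz. destruct M_ICIR as [Hm _]. destruct (Hm t Ht) as [_ [_ Hiff]].
      rewrite Hz in Halloc. destruct (Rmult_integral _ _ Halloc) as [A|A].
      * split; [|apply Hiff]; auto.
      * split; [apply Hiff|]; auto.
Qed.

End Envelope.

Lemma undominated_serves_with_floor r q u :
  undominated tlo thi qbar P c alpha r q u ->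
  u thi = 0 /\ serves_with_floor (envelope r q) r q.
Proof.
  intros [HM Hnd]. apply (RS_floor_le_serves r q u HM).
  intros t Ht. apply Rnot_lt_le. intros Hlt. apply Hnd.
  exists (floor_r r q), (floor_q r q), (rent r q).
  split; [exact (floor_ICIR r q u HM)|split; [exact HM|split]].
  - intros s Hs. exact (RS_floor_ge r q u HM s Hs).
  - exists t; split; auto.
Qed.

Lemma undominated_floor_properties r q u :
  undominated tlo thi qbar P c alpha r q u ->
  floor_randomized tlo thi qbar qhat r q u /\ left_continuous tlo thi r q /\ DD tlo thi qe q.
Proof.
  intros Hund. destruct (undominated_serves_with_floor r q u Hund) as [Hu Hserves].
  apply (floor_service_properties (envelope r q)); auto.
  - exact (envelope_regular r q u (proj1 Hund)).
  - exact (proj1 Hund).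
Qed.

(* A dominating mechanism is itself weakly improved upon by its floor mechanism. *)
Lemma dominated_by_floor_mechanism r q u :
  dominated tlo thi qbar P c alpha r q u ->
  exists r' q' u',
    dominates tlo thi qbar P c alpha r' q' u' r q u /\
    floor_randomized tlo thi qbar qhat r' q' u' /\
    left_continuous tlo thi r' q' /\ DD tlo thi qe q'.
Proof.
  intros [r1 [q1 [u1 [HM1 [HM [Hge [t [Ht Hgt]]]]]]]].
  exists (floor_r r1 q1), (floor_q r1 q1), (rent r1 q1).
  assert (Hfloor := floor_ICIR r1 q1 u1 HM1).
  assert (Himp := RS_floor_ge r1 q1 u1 HM1).
  split; [|apply (floor_service_properties (envelope r1 q1)); auto].
  - split; [exact Hfloor|split; [exact HM|split]].
    + intros s Hs. specialize (Himp s Hs). specialize (Hge s Hs). lra.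
    + exists t. split; auto. specialize (Himp t Ht). lra.
  - exact (envelope_regular r1 q1 u1 HM1).
  - exact (floor_serves r1 q1 u1 HM1).
  - exact (rent_thi r1 q1 u1 HM1).
Qed.

End Model.

Theorem theorem2
  (tlo thi c qbar alpha qhat : R) (P qe : R -> R)
  (Htheta : 0 < tlo < thi)
  (Hc : 0 < c)
  (Hqbar : 0 < qbar)
  (HPcont : forall x, 0 <= x <= qbar ->
     filterlim P (within (fun y => 0 <= y <= qbar) (locally x)) (locally (P x)))
  (HPdec : forall x y, 0 <= x -> x < y -> y <= qbar -> P y < P x)
  (HPqbar : P qbar = 0)
  (* qe = P^{-1} on Theta: the efficient quantity *)
  (Hqe : forall t, inTheta tlo thi t -> 0 <= qe t <= qbar /\ P (qe t) = t)
  (* Assumption (A2) *)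
  (HA2 : TS P c thi (qe thi) > 0)
  (* qhat is the quantity floor: V(qhat) - qhat P(qhat) = c *)
  (Hqhat : 0 < qhat <= qbar /\ V P qhat - qhat * P qhat = c)
  (Halpha : 0 <= alpha < 1)
  (r q u : R -> R)
  (HM : ICIR tlo thi qbar r q u) :
  (undominated tlo thi qbar P c alpha r q u ->
     floor_randomized tlo thi qbar qhat r q u /\
     left_continuous tlo thi r q /\ DD tlo thi qe q) /\
  (dominated tlo thi qbar P c alpha r q u ->
     exists r' q' u' : R -> R,
       dominates tlo thi qbar P c alpha r' q' u' r q u /\
       floor_randomized tlo thi qbar qhat r' q' u' /\
       left_continuous tlo thi r' q' /\ DD tlo thi qe q').
Proof.
  destruct Hqhat as [Hqhat_range Hqhat_floor].
  split.
  - eapply undominated_floor_properties; eauto.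
  - eapply dominated_by_floor_mechanism; eauto.
Qed.
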